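(* Let $V=V_{\bar0}\oplus V_{\bar1}$ be an $\mathcal{L}$-module which is free of rank $2$ as a $\mathbb{C}[L_{0,0}]$-module, with homogeneous basis elements $1_{\bar0}\in V_{\bar0}$ and $1_{\bar1}\in V_{\bar1}$; write $f(t)1_{\bar0}:=f(L_{0,0})1_{\bar0}$ and $g(x)1_{\bar1}:=g(L_{0,0})1_{\bar1}$ for polynomials $f,g$. Suppose $\lambda\in\mathbb{C}^*$ and $a,b\in\mathbb{C}$ are such that for all $f\in\mathbb{C}[t]$, $g\in\mathbb{C}[x]$, $m\in\mathbb{Z}$, $i\in\mathbb{Z}_+$: $L_{m,i}f(t)1_{\bar0}=\lambda^m(\delta_{i,0}(t-mqa)+\delta_{q,-1}\delta_{i,1}b)f(t-mq)1_{\bar0}$, $L_{m,i}g(x)1_{\bar1}=\lambda^m(\delta_{i,0}(x-mq(a+\frac12))+\delta_{q,-1}\delta_{i,1}b)g(x-mq)1_{\bar1}$, and moreover $G_{\frac12,0}1_{\bar0}=1_{\bar1}$, $G_{\frac12,1}1_{\bar0}=0$, $G_{\frac12,0}1_{\bar1}=q\lambda(t-qa)1_{\bar0}$, $G_{\frac12,1}1_{\bar1}=2q\lambda\delta_{q,-1}b1_{\bar0}$. Then for all $m\in\frac12+\mathbb{Z}$ and $i\in\mathbb{Z}_+$: $$G_{m,i}1_{\bar0}=\lambda^{m-\frac12}\delta_{i,0}1_{\bar1},\qquad G_{m,i}1_{\bar1}=q\lambda^{m+\frac12}\big(\delta_{i,0}(t-2mqa)+2\delta_{q,-1}\delta_{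i,1}b\big)1_{\bar0}.$$
   Context: Fix $q\in\mathbb{C}^*$; $\mathbb{Z}_+=\{0,1,2,\dots\}$; $\delta$ is the Kronecker delta. The Neveu-Schwarz-Block algebra $\mathcal{L}$ is the Lie superalgebra over $\mathbb{C}$ with even basis $\{L_{m,i}\mid m\in\mathbb{Z},i\in\mathbb{Z}_+\}$, odd basis $\{G_{l,j}\mid l\in\frac12+\mathbb{Z},j\in\mathbb{Z}_+\}$ and brackets $[L_{m,i},L_{n,j}]=(n(i+q)-m(j+q))L_{m+n,i+j}$, $[L_{m,i},G_{l,j}]=(l(i+q)-m(j+\frac{q}{2}))G_{m+l,i+j}$, $[G_{l,i},G_{r,j}]=2qL_{l+r,i+j}$. Modules are supermodules. $L_{0,0}$ acts on $V_{\bar0}=\mathbb{C}[L_{0,0}]1_{\bar0}\cong\mathbb{C}[t]$ as multiplication by $t$ and on $V_{\bar1}=\mathbb{C}[L_{0,0}]1_{\bar1}\cong\mathbb{C}[x]$ as multiplication by $x$. *)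

From mathcomp Require Import all_boot all_order all_algebra.
Set Implicit Arguments. Unset Strict Implicit. Unset Printing Implicit Defensive.
Import Order.TTheory GRing.Theory Num.Theory.
Local Open Scope ring_scope.

(* Complex numbers are modelled by an arbitrary numClosedFieldType C
   (algebraically closed, characteristic 0; includes C = complex numbers).

   The module V, free of rank 2 over C[L_{0,0}] with homogeneous basis
   1_0 in V_0 and 1_1 in V_1, is modelled concretely as
      V := {poly C} * {poly C},   (f, g)  <->  f(t) 1_0 + g(x) 1_1,
   so that V_0 = {poly C} * 0 and V_1 = 0 * {poly C}.

   Indexing: Lact m i  = action of L_{m,i}   (m : int, i : nat),
             Gact k j  = action of G_{k+1/2, j} (k : int, j : nat). *)

Definition Vsp (C : numClosedFieldType) := ({poly C} * {poly C})%type.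

Definition kron (C : numClosedFieldType) (b : bool) : C := (b%:R : C).

Definition halfz (C : numClosedFieldType) (k : int) : C := k%:~R + 2^-1.

Definition NSB_supermodule (C : numClosedFieldType) (q : C)
    (Lact : int -> nat -> Vsp C -> Vsp C)
    (Gact : int -> nat -> Vsp C -> Vsp C) : Prop :=
  (forall m i (c : C) (u v : Vsp C), Lact m i (c *: u + v) = c *: Lact m i u + Lact m i v) /\
  (forall k j (c : C) (u v : Vsp C), Gact k j (c *: u + v) = c *: Gact k j u + Gact k j v) /\
  (* parity: L even, G odd *)
  (forall m i (f : {poly C}), (Lact m i (f, 0)).2 = 0) /\
  (forall m i (g : {poly C}), (Lact m i (0, g)).1 = 0) /\
  (forall k j (f : {poly C}), (Gact k j (f, 0)).1 = 0) /\
  (forall k j (g : {poly C}), (Gact k j (0, g)).2 = 0) /\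
  (forall (m n : int) (i j : nat) (v : Vsp C),
     Lact m i (Lact n j v) - Lact n j (Lact m i v)
     = (n%:~R * (i%:R + q) - m%:~R * (j%:R + q)) *: Lact (m + n) (i + j)%N v) /\
  (forall (m k : int) (i j : nat) (v : Vsp C),
     Lact m i (Gact k j v) - Gact k j (Lact m i v)
     = (halfz C k * (i%:R + q) - m%:~R * (j%:R + q / 2%:R)) *: Gact (m + k) (i + j)%N v) /\
  (* [G_{l,i}, G_{r,j}] = 2q L_{l+r,i+j}, l = k1+1/2, r = k2+1/2, l+r = k1+k2+1 *)
  (forall (k1 k2 : int) (i j : nat) (v : Vsp C),
     Gact k1 i (Gact k2 j v) + Gact k2 j (Gact k1 i v)
     = (2%:R * q) *: Lact (k1 + k2 + 1) (i + j)%N v).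

From mathcomp Require Import all_boot all_order all_algebra ring zify.
Import Order.TTheory GRing.Theory Num.Theory.
Local Open Scope ring_scope.

(* Parity and the bracket with L_{0,0} give
   G_{k+1/2,j} (f(t) 1_0) = f(x - (k+1/2)q) G_{k+1/2,j} 1_0, so everything hinges
   on the polynomials G_{k+1/2,j} 1_0.  Applying [L_{m,i}, G_{k+1/2,j}] to 1_0
   with k = 0 (or m = 2, k = -1) and the known G_{1/2,0} 1_0, G_{1/2,1} 1_0 gives
   c G_{n+1/2,i} 1_0 = (explicit constant) with c a nonzero multiple of q (1 - n),
   q or (for i > 0, from two such equations whose coefficients differ by n + 1/2)
   of n + 1/2; characteristic 0 makes these nonzero.  Then the anticommutator
   {G_{k+1/2,i}, G_{1/2,0}} = 2q L_{k+1,i} applied to 1_0 yields G_{k+1/2,i} 1_1. *)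

Lemma pairD (U V : zmodType) (u u' : U) (v v' : V) :
  (u, v) + (u', v') = (u + u', v + v').
Proof. by []. Qed.

Lemma pairN (U V : zmodType) (u : U) (v : V) : - (u, v) = (- u, - v).
Proof. by []. Qed.

Lemma pairZ (R : pzRingType) (U V : lmodType R) (c : R) (u : U) (v : V) :
  c *: (u, v) = (c *: u, c *: v).
Proof. by []. Qed.

Lemma mul2_halfz (C : numClosedFieldType) (k : int) : 2 * halfz C k = (2 * k + 1)%:~R.
Proof. by rewrite /halfz mulrDr divff ?pnatr_eq0 // intrD intrM. Qed.

Lemma halfz_neq0 (C : numClosedFieldType) (k : int) : halfz C k != 0.
Proof.
apply: contraTneq isT => hk0.
have := mul2_halfz C k; rewrite hk0 mulr0 => /esym/eqP.
by rewrite intr_eq0; lia.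
Qed.

Lemma scalerI_polyC (F : fieldType) (d e : F) (p : {poly F}) :
  d != 0 -> d *: p = (d * e)%:P -> p = e%:P.
Proof. by move=> d0; rewrite polyCM -mul_polyC => /mulfI; apply; rewrite polyC_eq0. Qed.

Section Supermodule.

Context {C : numClosedFieldType} {q : C} {Lact Gact : int -> nat -> Vsp C -> Vsp C}.
Hypothesis hmod : NSB_supermodule q Lact Gact.

Lemma GactZD k j c u v : Gact k j (c *: u + v) = c *: Gact k j u + Gact k j v.
Proof. by case: hmod => _ []. Qed.

Lemma Gact0 k j : Gact k j 0 = 0.
Proof.
have := GactZD k j 1 0 0; rewrite !scale1r addr0.
by move/esym/eqP; rewrite -subr_eq0 addrK => /eqP.
Qed.

Lemma GactD k j : {morph Gact k j : u v / u + v}.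
Proof. by move=> u v; rewrite -{1}(scale1r u) GactZD scale1r. Qed.

Lemma GactZ k j c : {morph Gact k j : u / c *: u}.
Proof. by move=> u; rewrite -(addr0 (c *: u)) GactZD Gact0 addr0. Qed.

Lemma Gact_even k j f : Gact k j (f, 0) = (0, (Gact k j (f, 0)).2).
Proof. by case: hmod => _ [_ [_ [_ [parG _]]]]; rewrite [LHS]surjective_pairing parG. Qed.

Definition Gcoef k j : {poly C} := (Gact k j (1, 0)).2.

Lemma Gact_one k j : Gact k j (1, 0) = (0, Gcoef k j).
Proof. exact: Gact_even. Qed.

Section WeightShift.

Hypothesis Lact00_even : forall f, Lact 0 0 (f, 0) = ('X * f, 0).
Hypothesis Lact00_odd : forall g, Lact 0 0 (0, g) = (0, 'X * g).

Lemma Gact_mulX k j f :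
  Gact k j ('X * f, 0) = (0, ('X - (halfz C k * q)%:P) * (Gact k j (f, 0)).2).
Proof.
case: hmod => _ [_ [_ [_ [_ [_ [_ [LG _]]]]]]].
have E := LG 0 k 0%N j (f, 0).
rewrite add0r add0n mul0r subr0 add0r Lact00_even Gact_even Lact00_odd in E.
move/eqP: E; rewrite subr_eq addrC -subr_eq => /eqP <-.
by rewrite pairZ pairN pairD scaler0 subr0 mulrBl mul_polyC.
Qed.

Lemma Gact_even_comp k j f :
  Gact k j (f, 0) = (0, (f \Po ('X - (halfz C k * q)%:P)) * Gcoef k j).
Proof.
elim/poly_ind: f => [|f c IHf]; first by rewrite comp_poly0 mul0r Gact0.
have -> : ((f * 'X + c%:P, 0) : Vsp C) = ('X * f, 0) + c *: (1, 0).
  by rewrite pairZ pairD scaler0 addr0 -mul_polyC mulr1 mulrC.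
rewrite GactD GactZ Gact_mulX IHf Gact_even /Gcoef comp_poly_MXaddC.
by rewrite /= pairZ pairD scaler0 addr0 -mul_polyC; congr pair; ring.
Qed.

End WeightShift.

Section IntermediateSeries.

Context {lam a b : C}.
Hypotheses (hq : q != 0) (hlam : lam != 0).
Hypothesis Lact_evenE : forall (f : {poly C}) (m : int) (i : nat),
  Lact m i (f, 0) =
  (lam ^ m *: ((kron C (i == 0%N) *: ('X - (m%:~R * q * a)%:P)
                + (kron C (q == -1) * kron C (i == 1%N) * b)%:P)
               * (f \Po ('X - (m%:~R * q)%:P))), 0).
Hypothesis Lact_oddE : forall (g : {poly C}) (m : int) (i : nat),
  Lact m i (0, g) =
  (0, lam ^ m *: ((kron C (i == 0%N) *: ('X - (m%:~R * q * (a + 2^-1))%:P)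
                   + (kron C (q == -1) * kron C (i == 1%N) * b)%:P)
                  * (g \Po ('X - (m%:~R * q)%:P)))).
Hypothesis Gact00_one : Gact 0 0 (1, 0) = (0, 1).
Hypothesis Gact01_one : Gact 0 1 (1, 0) = 0.

Lemma Lact00_evenE f : Lact 0 0 (f, 0) = ('X * f, 0).
Proof. by rewrite Lact_evenE /kron !mulr0 !mul0r subr0 comp_polyXr expr0z !scale1r addr0. Qed.

Lemma Lact00_oddE g : Lact 0 0 (0, g) = (0, 'X * g).
Proof. by rewrite Lact_oddE /kron !mulr0 !mul0r subr0 comp_polyXr expr0z !scale1r addr0. Qed.

Lemma Lact_even_one m i :
  Lact m i (1, 0) =
  (lam ^ m *: (kron C (i == 0%N) *: ('X - (m%:~R * q * a)%:P)
               + (kron C (q == -1) * kron C (i == 1%N) * b)%:P), 0).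
Proof. by rewrite Lact_evenE -polyC1 comp_polyC polyC1 mulr1. Qed.

Lemma Gcoef_bracket m k i j (c : C) : Gcoef k j = c%:P ->
  (halfz C k * (i%:R + q) - m%:~R * (j%:R + q / 2)) *: Gcoef (m + k) (i + j)
  = (lam ^ m * c * kron C (i == 0%N) * q * (halfz C k - m%:~R / 2))%:P.
Proof.
move=> hc; case: hmod => _ [_ [_ [_ [_ [_ [_ [LG _]]]]]]].
set d := (X in X *: _).
rewrite -[d *: _]/((d *: Gact (m + k) (i + j) (1, 0)).2) -LG.
rewrite Gact_one hc Lact_oddE Lact_even_one (Gact_even_comp Lact00_evenE Lact00_oddE) /= hc.
rewrite ?(comp_polyC, comp_polyZ, comp_polyB, comp_polyD, comp_polyX).
by rewrite -!mul_polyC /halfz; ring.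
Qed.

Lemma Gcoef00 : Gcoef 0 0 = 1%:P.
Proof. by rewrite /Gcoef Gact00_one polyC1. Qed.

Lemma Gcoef01 : Gcoef 0 1 = 0%:P.
Proof. by rewrite /Gcoef Gact01_one polyC0. Qed.

Lemma Gcoef_n0 n : n != 1 -> Gcoef n 0 = (lam ^ n)%:P.
Proof.
move=> hn1; have := Gcoef_bracket n 0 0 0 1 Gcoef00.
rewrite addr0 /kron eqxx; set d := (X in X *: _) => E.
have dE : d = q * 2^-1 * (1 - n)%:~R by rewrite /d /halfz intrB; ring.
apply: (@scalerI_polyC _ d); last by rewrite E dE /halfz intrB /=; congr _%:P; ring.
by rewrite dE !mulf_neq0 ?invr_eq0 ?pnatr_eq0 // intr_eq0 subr_eq0 eq_sym.
Qed.

Lemma Gcoef10 : Gcoef 1 0 = lam%:P.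
Proof.
have := Gcoef_bracket 2 (-1) 0 0 (lam ^ (-1)) (Gcoef_n0 (-1) isT).
rewrite /kron eqxx; set d := (X in X *: _) => E.
have dE : d = - q * halfz C 1 by rewrite /d /halfz; ring.
apply: (@scalerI_polyC _ d); first by rewrite dE mulf_neq0 ?oppr_eq0 ?halfz_neq0.
rewrite E dE; congr _%:P.
have -> : lam ^ 2 * lam ^ (-1) = lam by rewrite -exprzDr ?unitfE.
rewrite /halfz /=; ring.
Qed.

Lemma Gcoef_S n i : Gcoef n i.+1 = 0.
Proof.
have := Gcoef_bracket n 0 i.+1 0 1 Gcoef00; set c1 := (X in X *: _) => E1.
have := Gcoef_bracket n 0 i 1 0 Gcoef01; set c2 := (X in X *: _) => E2.
have c12E : c1 - c2 = halfz C n by rewrite /c1 /c2 /halfz; ring.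
rewrite addr0 addn0 /kron /= mulr0 !mul0r polyC0 in E1.
rewrite addr0 addn1 !mulr0 !mul0r polyC0 in E2.
apply/eqP; apply: contraTT (halfz_neq0 C n) => Gn0; rewrite negbK -c12E.
move/eqP: E1; rewrite scaler_eq0 (negPf Gn0) orbF => /eqP ->.
by move/eqP: E2; rewrite scaler_eq0 (negPf Gn0) orbF => /eqP ->; rewrite subrr.
Qed.

Lemma GcoefE n i : Gcoef n i = (lam ^ n * kron C (i == 0%N))%:P.
Proof.
case: i => [|i]; last by rewrite Gcoef_S /kron mulr0 polyC0.
rewrite /kron mulr1; have [->|hn1] := eqVneq n 1; last exact: Gcoef_n0.
by rewrite Gcoef10 expr1z.
Qed.

Lemma Gact_even_one k i : Gact k i (1, 0) = (0, (lam ^ k * kron C (i == 0%N))%:P).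
Proof. by rewrite Gact_one GcoefE. Qed.

Hypothesis Gact00_odd_one : Gact 0 0 (0, 1) = ((q * lam) *: ('X - (q * a)%:P), 0).

Lemma Gact_odd_one k i :
  Gact k i (0, 1) =
  ((q * lam ^ (k + 1)) *:
     (kron C (i == 0%N) *: ('X - (2%:R * halfz C k * q * a)%:P)
      + (2%:R * kron C (q == -1) * kron C (i == 1%N) * b)%:P), 0).
Proof.
case: hmod => _ [_ [_ [_ [_ [_ [_ [_ GG]]]]]]].
have E := GG k 0 i 0%N (1, 0).
rewrite Gact00_one Gact_even_one addr0 addn0 in E.
have polyC_odd (c : C) : ((0, c%:P) : Vsp C) = c *: (0, 1).
  by rewrite pairZ scaler0 -mul_polyC mulr1.
rewrite [(0, (_ * _)%:P)]polyC_odd GactZ Gact00_odd_one Lact_even_one in E.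
rewrite (canRL (addrK _) E) !pairZ pairN pairD !scaler0 subr0.
rewrite mul2_halfz !exprzDr ?unitfE // expr1z !intrD intrM -!mul_polyC.
by congr pair; ring.
Qed.

End IntermediateSeries.

End Supermodule.

Theorem lemma5p2 (C : numClosedFieldType) (q : C) (hq : q != 0)
    (Lact : int -> nat -> Vsp C -> Vsp C) (Gact : int -> nat -> Vsp C -> Vsp C)
    (hmod : NSB_supermodule q Lact Gact)
    (lam a b : C) (hlam : lam != 0) :
  (forall (f : {poly C}) (m : int) (i : nat),
     Lact m i (f, 0) =
     (lam ^ m *: ((kron C (i == 0%N) *: ('X - (m%:~R * q * a)%:P)
                   + (kron C (q == -1) * kron C (i == 1%N) * b)%:P)
                  * (f \Po ('X - (m%:~R * q)%:P))), 0)) ->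
  (forall (g : {poly C}) (m : int) (i : nat),
     Lact m i (0, g) =
     (0, lam ^ m *: ((kron C (i == 0%N) *: ('X - (m%:~R * q * (a + 2^-1))%:P)
                      + (kron C (q == -1) * kron C (i == 1%N) * b)%:P)
                     * (g \Po ('X - (m%:~R * q)%:P))))) ->
  Gact 0 0 (1, 0) = (0, 1) ->
  Gact 0 1 (1, 0) = 0 ->
  Gact 0 0 (0, 1) = ((q * lam) *: ('X - (q * a)%:P), 0) ->
  Gact 0 1 (0, 1) = ((2%:R * q * lam * kron C (q == -1) * b)%:P, 0) ->
  forall (k : int) (i : nat),
    Gact k i (1, 0) = (0, (lam ^ k * kron C (i == 0%N))%:P) /\
    Gact k i (0, 1) =
      ((q * lam ^ (k + 1)) *:
         (kron C (i == 0%N) *: ('X - (2%:R * halfz C k * q * a)%:P)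
          + (2%:R * kron C (q == -1) * kron C (i == 1%N) * b)%:P), 0).
Proof.
(* The value of G_{1/2,1} 1_1 is not needed: it is the case k = 0, i = 1 of the conclusion. *)
move=> Lact_evenE Lact_oddE Gact00_one Gact01_one Gact00_odd_one _ k i; split.
- exact: (Gact_even_one hmod hq hlam Lact_evenE Lact_oddE Gact00_one Gact01_one).
- exact: (Gact_odd_one hmod hq hlam Lact_evenE Lact_oddE Gact00_one Gact01_one Gact00_odd_one).
Qed.
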